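(* Let $h\in H$ and let $P^+_h(\mathbf t_{\mathcal N})=\sum_{\beta\in\mathcal B_h}p_\beta\mathbf t_{\mathcal N}^\beta$ be the quotient in the decomposition $f_h=P^+_h+f^{neg}_h$ (with $P^+_h$ a finite sum of monomials with exponents $\beta\not<0$ and $f^{neg}_h$ of negative degree in every $t_n$). Then the polynomial part satisfies $$P_h(\mathbf t_{\mathcal N})=\sum_{\beta\in\mathcal B_h}\mathfrak s(\beta)\,p_\beta\,\mathbf t_{\mathcal N}^{\beta}.$$
   Context: Let $\Gamma$ be a connected plumbing graph which is a tree, all of whose vertices have genus $0$ and an integer decoration $e_v$, such that the intersection matrix $I$ ($I_{vv}=e_v$, $I_{vw}=1$ if $v,w$ are adjacent, $0$ otherwise) is negative definite. Let $\mathcal V$ be its vertex set, $\delta_v$ the valency of $v$, and $\mathcal N=\{v:\delta_v\ge 3\}$ the set of nodes (assumed nonempty). Let $L=\bigoplus_v\mathbb Z E_v$ with the form given by $I$, $L'=\{l'\in L\otimes\mathbb Q:(l',E_v)\in\mathbb Z\ \forall v\}$ with basis $E_v^*$ defined by $(E_v^*,E_w)=-\delta_{vw}$, $H=L'/L$ and $[l']$ the class of $l'$. For $l'=\sum l_vE_v\in L\otimes\mathbb Q$ put $\mathbf t^{l'}=\prod_v t_v^{l_v}$. The zeta-function is $f(\mathbf t)=\prod_{v}(1-\mathbf t^{E_v^*})^{\delta_v-2}$; let $Z(\mathbf t)=\sum_{l'\in L'}p_{l'}\mathbf t^{l'}$ be its Taylor expansion at the origin, $Z_h=\sum_{[l']=h}p_{l'}\mathbf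 t^{l'}$, and $f_h(\mathbf t)$ the rational function whose expansion is $Z_h$. Let $\pi_{\mathcal N}$ be the projection of $L\otimes\mathbb Q$ onto $\bigoplus_{n\in\mathcal N}\mathbb QE_n$ forgetting non-node coordinates, and $\mathbf t_{\mathcal N}^x:=\prod_{n\in\mathcal N}t_n^{x_n}$ with $x_n$ the coordinates of $\pi_{\mathcal N}(x)$. The reduced zeta-function is $f_h(\mathbf t_{\mathcal N}):=f_h(\mathbf t)|_{t_v=1,\,v\notin\mathcal N}$; it can be written as $\mathbf t_{\mathcal N}^{r_h}\sum_\ell b_\ell\mathbf t_{\mathcal N}^{\ell}/A(\mathbf t_{\mathcal N})$, $A=\prod_{n\in\mathcal N}(1-\mathbf t_{\mathcal N}^{a_n})$, $a_n=\lambda_n\pi_{\mathcal N}(E_n^* )$, $\lambda_n>0$ (all coordinates of $a_n$ positive). A rational function $R/A$ ($R$ a finite sum of monomials with rational exponents) has negative degree in $t_n$ if every monomial of $R$ has $t_n$-exponent smaller than the $t_n$-exponent of $\mathbf t_{\mathcal N}^{\sum a_{n'}}$. For $\beta=\sum_{n\in\mathcal N}\beta_nE_n$, $\beta<0$ means all $\beta_n<0$. Orbifold graph $\Gamma^{orb}$: vertex set $\mathcal N$, with $n,n'$ joined by an edge iff the path in $\Gamma$ between them has all interior vertices of valency $2$; $\delta_{n,\mathcal N}$ denotes the valency of $n$ in $\Gamma^{orb}$ (a tree). For $n\in\mathcal N$, $P^n_h$ is the unique finite sum of monomials in $\mathbf t_{\mathcal N}$, each with $t_n$-exponent $\ge0$,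 such that $f_h-P^n_h$ (written over $A$) has negative degree in $t_n$ (one-variable polynomial part in $t_n$, other variables as coefficients). For an edge $nn'$ of $\Gamma^{orb}$, $P^{n,n'}_h$ is the unique finite sum of monomials each having $t_n$-exponent $\ge0$ or $t_{n'}$-exponent $\ge0$, such that $f_h-P^{n,n'}_h$ has negative degree in both $t_n$ and $t_{n'}$. The polynomial part is $P_h=\sum_{\text{edges } nn' \text{ of }\Gamma^{orb}}P^{n,n'}_h-\sum_{n\in\mathcal N}(\delta_{n,\mathcal N}-1)P^n_h$. Multiplicity: choose $n_0\in\mathcal N$, orient the edges of $\Gamma^{orb}$ towards $n_0$, and write $n>n'$ if there is an edge oriented from $n$ to $n'$. For $\beta$, let $\mathfrak s_n(\beta)=1$ if $\beta_n\ge0$ and $0$ otherwise; for $n>n'$ let $\mathfrak s_{n>n'}(\beta)=1$ if $\beta_n\ge0$ and $\beta_{n'}<0$, and $0$ otherwise. Set $\mathfrak s(\beta)=\mathfrak s_{n_0}(\beta)+\sum_{n>n'}\mathfrak s_{n>n'}(\beta)$ (this does not depend on $n_0$). *)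

From HB Require Import structures.
From mathcomp Require Import all_boot all_order all_algebra.
Set Implicit Arguments. Unset Strict Implicit. Unset Printing Implicit Defensive.
Import Order.TTheory GRing.Theory Num.Theory.
Local Open Scope ring_scope.

(* Exponents: vectors of rational coordinates l' = sum_v l_v E_v,      *)
(* indexed by the vertex set 'I_k.  Monomial t^l' = prod_v t_v^{l_v}.  *)
Definition expo (k : nat) := 'rV[rat]_k.

(* Finite sums of monomials with rational exponents and integer
   coefficients ("generalized polynomials"), as lists of terms. *)
Definition gpoly (k : nat) := seq (expo k * int).

Definition gcoef (k : nat) (P : gpoly k) (g : expo k) : int :=
  \sum_(m <- P | m.1 == g) m.2.

Definition gmul (k : nat) (P Q : gpoly k) : gpoly k :=
  [seq (m.1 + m'.1, m.2 * m'.2) | m <- P, m' <- Q].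
Definition gone (k : nat) : gpoly k := [:: (0, 1)].
Definition gsub (k : nat) (P Q : gpoly k) : gpoly k :=
  P ++ [seq (m.1, - m.2) | m <- Q].
Definition gbinom (k : nat) (c : expo k) : gpoly k := [:: (0, 1); (c, -1)].
Definition gprod (k : nat) (s : seq (gpoly k)) : gpoly k := foldr (@gmul k) (gone k) s.
Definition gpow (k : nat) (P : gpoly k) (n : nat) : gpoly k := iter n (gmul P) (gone k).
Definition gmap_exp (k : nat) (f : expo k -> expo k) (P : gpoly k) : gpoly k :=
  [seq (f m.1, m.2) | m <- P].
Definition gequiv (k : nat) (P Q : gpoly k) : Prop := forall g, gcoef P g = gcoef Q g.

(* formal series with rational exponents: coefficient functions *)
Definition series (k : nat) := expo k -> int.
Definition smul (k : nat) (P : gpoly k) (Z : series k) : series k :=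
  fun g => \sum_(m <- P) m.2 * Z (g - m.1).

(* Plumbing graph: vertices 'I_k, adjacency adj, decorations e.        *)
Definition valency (k : nat) (adj : rel 'I_k) (v : 'I_k) : nat := #|[set w | adj v w]|.

Definition is_tree (k : nat) (adj : rel 'I_k) : Prop :=
  [/\ symmetric adj, irreflexive adj,
      (forall u v, connect adj u v) &
      #|[set p : 'I_k * 'I_k | adj p.1 p.2 && (p.1 < p.2)%N]| = k.-1].

Definition intmat (k : nat) (adj : rel 'I_k) (e : 'I_k -> int) : 'M[rat]_k :=
  \matrix_(i, j) (if i == j then (e i)%:~R else if adj i j then 1 else 0).

Definition neg_def (k : nat) (M : 'M[rat]_k) : Prop :=
  forall x : 'rV[rat]_k, x != 0 -> (x *m M *m x^T) 0 0 < 0.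

(* E_v^* : (E_v^* , E_w) = - delta_vw, i.e. E_v^* *m I = - e_v *)
Definition Estar (k : nat) (M : 'M[rat]_k) (v : 'I_k) : expo k := - row v (invmx M).

Definition inL (k : nat) (x : expo k) : bool := [forall i, x 0 i \is a Num.int].
Definition inL' (k : nat) (M : 'M[rat]_k) (x : expo k) : bool := inL (x *m M).

Definition nodes (k : nat) (adj : rel 'I_k) : {set 'I_k} := [set v | (3 <= valency adj v)%N].

(* zeta function f = prod_v (1 - t^{E_v^*})^(delta_v - 2) = zNum / zDen *)
Definition zNum (k : nat) (adj : rel 'I_k) (M : 'M[rat]_k) : gpoly k :=
  gprod [seq gpow (gbinom (Estar M v)) (valency adj v - 2) | v <- enum 'I_k & (2 <= valency adj v)%N].
Definition zDen (k : nat) (adj : rel 'I_k) (M : 'M[rat]_k) : gpoly k :=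
  gprod [seq gpow (gbinom (Estar M v)) (2 - valency adj v) | v <- enum 'I_k & (valency adj v < 2)%N].

(* Z is the Taylor expansion at the origin of zNum / zDen:
   supported on nonnegative exponents and zDen * Z = zNum. *)
Definition is_taylor (k : nat) (Num Den : gpoly k) (Z : series k) : Prop :=
  (forall g, Z g != 0 -> forall i, 0 <= g 0 i) /\
  (forall g, smul Den Z g = gcoef Num g).

Definition Zpart (k : nat) (Z : series k) (h0 : expo k) : series k :=
  fun g => if inL (g - h0) then Z g else 0.

(* Q / prod_{c in cs} (1 - t^c) is a rational function (the c having
   positive coordinates) whose Taylor expansion is the series Zh. *)
Definition ratrep (k : nat) (Zh : series k) (Q : gpoly k) (cs : seq (expo k)) : Prop :=
  (forall c, c \in cs -> forall i, 0 < c 0 i) /\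
  (forall g, smul (gprod (map (@gbinom k) cs)) Zh g = gcoef Q g).

(* pi_N : forget non-node coordinates (i.e. put t_v = 1 for v not a node) *)
Definition projN (k : nat) (adj : rel 'I_k) (x : expo k) : expo k :=
  \row_i (if i \in nodes adj then x 0 i else 0).
Definition gred (k : nat) (adj : rel 'I_k) (P : gpoly k) : gpoly k := gmap_exp (projN adj) P.

Definition node_supp (k : nat) (adj : rel 'I_k) (P : gpoly k) : Prop :=
  forall g, gcoef P g != 0 -> forall v, v \notin nodes adj -> g 0 v = 0.

Definition avec (k : nat) (adj : rel 'I_k) (M : 'M[rat]_k) (lam : 'I_k -> rat) (n : 'I_k) : expo k :=
  lam n *: projN adj (Estar M n).
Definition Aden (k : nat) (adj : rel 'I_k) (M : 'M[rat]_k) (lam : 'I_k -> rat) : gpoly k :=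
  gprod [seq gbinom (avec adj M lam n) | n <- enum (nodes adj)].
Definition sumA (k : nat) (adj : rel 'I_k) (M : 'M[rat]_k) (lam : 'I_k -> rat) : expo k :=
  \sum_(n in nodes adj) avec adj M lam n.

(* The rational function Rn / A has negative degree in t_n *)
Definition neg_deg (k : nat) (adj : rel 'I_k) (M : 'M[rat]_k) (lam : 'I_k -> rat)
    (Rn : gpoly k) (n : 'I_k) : Prop :=
  forall g, gcoef Rn g != 0 -> g 0 n < sumA adj M lam 0 n.

(* numerator of (R / A) - P over A *)
Definition minus_over (k : nat) (adj : rel 'I_k) (M : 'M[rat]_k) (lam : 'I_k -> rat)
    (R P : gpoly k) : gpoly k := gsub R (gmul P (Aden adj M lam)).

Definition is_Pn (k : nat) (adj : rel 'I_k) (M : 'M[rat]_k) (lam : 'I_k -> rat)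
    (R : gpoly k) (n : 'I_k) (P : gpoly k) : Prop :=
  [/\ node_supp adj P,
      (forall g, gcoef P g != 0 -> 0 <= g 0 n) &
      neg_deg adj M lam (minus_over adj M lam R P) n].

Definition is_Pnn (k : nat) (adj : rel 'I_k) (M : 'M[rat]_k) (lam : 'I_k -> rat)
    (R : gpoly k) (n n' : 'I_k) (P : gpoly k) : Prop :=
  [/\ node_supp adj P,
      (forall g, gcoef P g != 0 -> (0 <= g 0 n) || (0 <= g 0 n')),
      neg_deg adj M lam (minus_over adj M lam R P) n &
      neg_deg adj M lam (minus_over adj M lam R P) n'].

Definition is_Pplus (k : nat) (adj : rel 'I_k) (M : 'M[rat]_k) (lam : 'I_k -> rat)
    (R : gpoly k) (P : gpoly k) : Prop :=
  [/\ node_supp adj P,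
      (forall g, gcoef P g != 0 -> exists2 n, n \in nodes adj & 0 <= g 0 n) &
      (forall n, n \in nodes adj -> neg_deg adj M lam (minus_over adj M lam R P) n)].

(* Orbifold graph: n, n' nodes joined iff the path in Gamma between them
   has all interior vertices of valency 2.  A simple path has at most k-2
   interior vertices, so we enumerate candidate interior sequences as
   m.-tuples with m < k. *)
Definition orb_adj (k : nat) (adj : rel 'I_k) (n n' : 'I_k) : bool :=
  [&& n \in nodes adj, n' \in nodes adj &
   [exists m : 'I_k, exists t : m.-tuple 'I_k,
      [&& path adj n (rcons (val t) n'), uniq (n :: rcons (val t) n') &
          all (fun w => valency adj w == 2) (val t)]]].

Definition orb_valency (k : nat) (adj : rel 'I_k) (n : 'I_k) : nat :=
  #|[set n' | orb_adj adj n n']|.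

(* polynomial part P_h (coefficientwise); each edge nn' counted once (n < n') *)
Definition Ph_coef (k : nat) (adj : rel 'I_k) (Pv : 'I_k -> gpoly k)
    (Pe : 'I_k -> 'I_k -> gpoly k) (g : expo k) : int :=
  \sum_(n : 'I_k) \sum_(n' : 'I_k | orb_adj adj n n' && (n < n')%N) gcoef (Pe n n') g
  - \sum_(n in nodes adj) ((orb_valency adj n)%:Z - 1) * gcoef (Pv n) g.

(* orientation towards n0:  n > n'  iff  nn' is an edge of Gamma^orb and
   n' lies on the path from n to n0 (n' = n0, or n' separates n from n0). *)
Definition oriented (k : nat) (adj : rel 'I_k) (n0 n n' : 'I_k) : bool :=
  orb_adj adj n n' &&
  ((n' == n0) || ~~ connect [rel x y | [&& adj x y, x != n' & y != n']] n n0).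

Definition sgn_nonneg (x : rat) : int := if 0 <= x then 1 else 0.
Definition mult_s (k : nat) (adj : rel 'I_k) (n0 : 'I_k) (b : expo k) : int :=
  sgn_nonneg (b 0 n0) +
  \sum_(n : 'I_k) \sum_(n' : 'I_k | oriented adj n0 n n')
     (if (0 <= b 0 n) && (b 0 n' < 0) then 1 else 0).

(* A leading-term argument, for the lexicographic order that compares the
   [t_n]-exponent first, shows that [P^n_h] is the part of [P^+_h] with
   [beta_n >= 0] and [P^{n,n'}_h] the part with [beta_n >= 0] or
   [beta_n' >= 0]; it needs the leading [t_n]-exponent of [A] to be the sum of
   those of its factors, which holds because negative definiteness makes every
   [E_v^*] nonnegative with a positive [v]-coordinate.  The coefficient of
   [t^beta] in [P_h] is therefore [p_beta] times
   [sum_{nn'} [beta_n >= 0 or beta_n' >= 0] - sum_n (delta_n - 1) [beta_n >= 0]].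
   Orient the orbifold tree towards [n_0]: every edge gets one direction and
   every node but [n_0] one outgoing edge, so inclusion-exclusion turns this
   count into [s(beta)]. *)

From HB Require Import structures.
From mathcomp Require Import all_boot all_order all_algebra.
From mathcomp Require Import ring.
Set Implicit Arguments. Unset Strict Implicit. Unset Printing Implicit Defensive.
Import Order.TTheory GRing.Theory Num.Theory.
Local Open Scope ring_scope.

Section LexOrder.
Variable k : nat.
Implicit Types (x y u v : expo k) (s : seq 'I_k).

Fixpoint lex_lt s x y : bool :=
  if s is i :: s' then (x 0 i < y 0 i) || ((x 0 i == y 0 i) && lex_lt s' x y)
  else false.

Lemma lex_ltxx s x : lex_lt s x x = false.
Proof. by elim: s => //= i s ->; rewrite ltxx eqxx. Qed.

Lemma lex_lt_trans s x y z : lex_lt s x y -> lex_lt s y z -> lex_lt s x z.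
Proof.
elim: s => //= i s IH.
case/orP=> [lxy|/andP[/eqP exy hxy]]; case/orP=> [lyz|/andP[/eqP eyz hyz]].
- by rewrite (lt_trans lxy lyz).
- by rewrite -eyz lxy.
- by rewrite exy lyz.
- by rewrite exy eyz eqxx (IH hxy hyz) orbT.
Qed.

Lemma lex_ltD2r s x y u : lex_lt s (x + u) (y + u) = lex_lt s x y.
Proof.
elim: s => //= i s ->; rewrite !mxE ltrD2r; congr (_ || (_ && _)).
by apply/eqP/eqP => [/addIr|->].
Qed.

Lemma lex_ltD s x y u v : lex_lt s x y -> lex_lt s u v -> lex_lt s (x + u) (y + v).
Proof.
move=> lxy luv; apply: (@lex_lt_trans _ _ (y + u)); first by rewrite lex_ltD2r.
by rewrite !(addrC y) lex_ltD2r.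
Qed.

Lemma lex_lt_total s x y :
  [|| lex_lt s x y, lex_lt s y x | all (fun i => x 0 i == y 0 i) s].
Proof. by elim: s => //= i s IH; case: (ltgtP (x 0 i) (y 0 i)). Qed.

(* Comparing the [n]-th coordinate first makes leading exponents control
   degrees in [t_n]. *)
Definition nlex_lt n x y := lex_lt (n :: enum 'I_k) x y.
Definition nlex_le n x y := (x == y) || nlex_lt n x y.

Lemma nlex_lt_total n x y : x != y -> nlex_lt n x y || nlex_lt n y x.
Proof.
move=> nxy; have := lex_lt_total (n :: enum 'I_k) x y.
rewrite /nlex_lt; case/or3P=> [->|->|/allP eq_xy]; rewrite ?orbT //.
case/eqP: nxy; apply/rowP => i; apply/eqP/eq_xy.
by rewrite inE mem_enum orbT.
Qed.

Lemma nlex_le_coord n x y : nlex_le n x y -> x 0 n <= y 0 n.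
Proof. by case/orP=> [/eqP->//|/orP[/ltW|/andP[/eqP-> _]]]. Qed.

Lemma nlex_leD n x y u v : nlex_le n x y -> nlex_le n u v -> nlex_le n (x + u) (y + v).
Proof.
rewrite /nlex_le /nlex_lt.
case/orP=> [/eqP->|lxy]; case/orP=> [/eqP->|luv]; rewrite ?eqxx //.
- by rewrite !(addrC y) lex_ltD2r luv orbT.
- by rewrite lex_ltD2r lxy orbT.
- by rewrite (lex_ltD lxy luv) orbT.
Qed.

Lemma nlex_leD_eq n x y u v :
  nlex_le n x y -> nlex_le n u v -> x + u = y + v -> x = y /\ u = v.
Proof.
rewrite /nlex_le /nlex_lt.
case/orP=> [/eqP->|lxy]; case/orP=> [/eqP->|luv] //.
- by move/addrI.
- by move/addIr => exy; rewrite exy lex_ltxx in lxy.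
- by move=> e; have := lex_ltD lxy luv; rewrite e lex_ltxx.
Qed.

Lemma nlex_max_exists n (l : seq (expo k)) : l != [::] ->
  exists2 m, m \in l & forall x, x \in l -> nlex_le n x m.
Proof.
elim: l => // a l IH _; case: (eqVneq l [::]) => [->|/IH [m ml maxm]].
  by exists a => [|x]; rewrite ?mem_head // inE => /eqP->; rewrite /nlex_le eqxx.
have [am|ma] := boolP (nlex_le n a m).
  exists m => [|x]; first by rewrite inE ml orbT.
  by rewrite inE => /orP[/eqP->|/maxm].
have lma : nlex_lt n m a.
  have nam : a != m by apply: contra ma => /eqP->; rewrite /nlex_le eqxx.
  by move: (nlex_lt_total n nam) ma; rewrite /nlex_le (negbTE nam) /= => /orP[->|].
exists a => [|x]; first exact: mem_head.
rewrite inE => /orP[/eqP->|/maxm]; first by rewrite /nlex_le eqxx.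
case/orP=> [/eqP->|lxm]; first by rewrite /nlex_le lma orbT.
by rewrite /nlex_le /nlex_lt (lex_lt_trans lxm lma) orbT.
Qed.

End LexOrder.

Section GeneralizedPolynomials.
Variable k : nat.
Implicit Types (P Q A D : gpoly k) (g x y p q : expo k).

Lemma gcoef_neq0_mem P g : gcoef P g != 0 -> g \in map fst P.
Proof.
apply: contraR => gP; rewrite /gcoef big_seq_cond big1 // => m /andP[mP /eqP e].
by case/negP: gP; rewrite -e map_f.
Qed.

Lemma gcoef_gsub P Q g : gcoef (gsub P Q) g = gcoef P g - gcoef Q g.
Proof. by rewrite /gcoef /gsub big_cat big_map /= sumrN. Qed.

Lemma gcoef_filter P (pr : pred (expo k)) g :
  gcoef (filter (fun m => pr m.1) P) g = if pr g then gcoef P g else 0.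
Proof.
rewrite /gcoef big_filter_cond; case: ifP => pg.
  by apply: eq_bigl => m; case: eqP => [->|]; rewrite ?pg ?andbF.
by apply: big1 => m /andP[pm /eqP e]; rewrite e pg in pm.
Qed.

Lemma gcoef_gmul_terms P Q g : gcoef (gmul P Q) g =
  \sum_(m <- P) \sum_(m' <- Q) (if m.1 + m'.1 == g then m.2 * m'.2 else 0).
Proof. by rewrite /gcoef /gmul big_mkcond big_allpairs_dep. Qed.

Lemma sum_terms_gcoef P (F : expo k -> int) :
  \sum_(m <- P) F m.1 * m.2 = \sum_(x <- undup (map fst P)) F x * gcoef P x.
Proof.
rewrite /gcoef; symmetry.
rewrite (eq_bigr (fun x => \sum_(m <- P | m.1 == x) F m.1 * m.2)); last first.
  by move=> x _; rewrite mulr_sumr; apply: eq_bigr => m /eqP ->.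
rewrite (exchange_big_dep predT) //=; apply: eq_big_seq => m mP.
rewrite -big_filter.
have -> : [seq x <- undup (map fst P) | m.1 == x] = [:: m.1].
  rewrite (eq_filter (a2 := pred1 m.1)) => [|x]; last by rewrite /= eq_sym.
  by apply: filter_pred1_uniq; rewrite ?undup_uniq ?mem_undup ?map_f.
by rewrite big_seq1.
Qed.

Lemma gcoef_gmul P Q g : gcoef (gmul P Q) g =
  \sum_(x <- undup (map fst P)) \sum_(y <- undup (map fst Q))
     (if x + y == g then gcoef P x * gcoef Q y else 0).
Proof.
pose F x y : int := if x + y == g then 1 else 0.
have FE x y c : F x y * c = if x + y == g then c else 0.
  by rewrite /F; case: eqP; rewrite ?mul1r ?mul0r.
rewrite gcoef_gmul_terms.
transitivity (\sum_(m <- P) (\sum_(y <- undup (map fst Q)) F m.1 y * gcoef Q y) * m.2).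
  apply: eq_bigr => m _; rewrite -sum_terms_gcoef mulr_suml.
  by apply: eq_bigr => m' _; rewrite -mulrA FE mulrC.
rewrite (sum_terms_gcoef P (fun x => \sum_(y <- _) F x y * gcoef Q y)).
apply: eq_bigr => x _; rewrite mulr_suml.
by apply: eq_bigr => y _; rewrite -mulrA FE [_ * gcoef P x]mulrC.
Qed.

Lemma gcoef_gmulBl P1 P2 Q g :
  gcoef (gmul (gsub P1 P2) Q) g = gcoef (gmul P1 Q) g - gcoef (gmul P2 Q) g.
Proof.
rewrite !gcoef_gmul_terms /gsub big_cat big_map /= -sumrN; congr (_ + _).
apply: eq_bigr => m _; rewrite -sumrN; apply: eq_bigr => m' _.
by case: eqP; rewrite ?oppr0 // mulNr.
Qed.

Lemma gcoef_gmul_filterU P Q (pr : pred (expo k)) g :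
  gcoef (gmul P Q) g = gcoef (gmul (filter (fun m => pr m.1) P) Q) g
                     + gcoef (gmul (filter (fun m => ~~ pr m.1) P) Q) g.
Proof. by rewrite !gcoef_gmul_terms !big_filter (bigID (fun m => pr m.1)). Qed.

Lemma gcoef_gmul_neq0 P Q g : gcoef (gmul P Q) g != 0 ->
  exists x y, [/\ gcoef P x != 0, gcoef Q y != 0 & g = x + y].
Proof.
rewrite gcoef_gmul => nz.
have /hasP [x _ /hasP [y _ /and3P [/eqP <- Px Qy]]] :
    has (fun x => has (fun y => [&& x + y == g, gcoef P x != 0 & gcoef Q y != 0])
         (undup (map fst Q))) (undup (map fst P)).
  apply: contraNT nz => /hasPn noterm; apply/eqP/big1_seq => x /andP[_ xP].
  apply: big1_seq => y /andP[_ yQ]; have /hasPn/(_ y yQ) := noterm x xP.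
  case: eqP => //= _; rewrite negb_and !negbK.
  by case/orP=> /eqP->; rewrite ?mul0r ?mulr0.
by exists x, y.
Qed.

Definition lead_exp n P p := gcoef P p != 0 /\ forall g, gcoef P g != 0 -> nlex_le n g p.

Lemma lead_exp_exists n P g : gcoef P g != 0 -> exists p, lead_exp n P p.
Proof.
move=> Pg; pose l := [seq x <- map fst P | gcoef P x != 0].
have gl : g \in l by rewrite mem_filter Pg gcoef_neq0_mem.
have [|p pl maxp] := nlex_max_exists n (l := l); first by case: l gl.
exists p; split; first by move: pl; rewrite mem_filter => /andP[].
by move=> x Px; apply: maxp; rewrite mem_filter Px gcoef_neq0_mem.
Qed.

Lemma gcoef_gmul_lead n P Q p q : lead_exp n P p -> lead_exp n Q q ->
  gcoef (gmul P Q) (p + q) = gcoef P p * gcoef Q q.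
Proof.
move=> [Pp maxp] [Qq maxq].
rewrite gcoef_gmul (bigD1_seq p) ?undup_uniq ?mem_undup ?gcoef_neq0_mem //=.
rewrite (bigD1_seq q) ?undup_uniq ?mem_undup ?gcoef_neq0_mem //= eqxx.
rewrite big1 => [|y yq]; last by case: eqP => // /addrI eyq; rewrite eyq eqxx in yq.
rewrite big1 ?addr0 // => x xp; apply: big1 => y _; case: eqP => // exy.
have [->|Px] := eqVneq (gcoef P x) 0; first by rewrite mul0r.
have [->|Qy] := eqVneq (gcoef Q y) 0; first by rewrite mulr0.
by have [exp _] := nlex_leD_eq (maxp x Px) (maxq y Qy) exy; rewrite exp eqxx in xp.
Qed.

Lemma lead_exp_gmul n P Q p q : lead_exp n P p -> lead_exp n Q q ->
  lead_exp n (gmul P Q) (p + q).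
Proof.
move=> lp lq; split; first by rewrite (gcoef_gmul_lead lp lq) mulf_neq0 ?lp.1 ?lq.1.
by move=> g /gcoef_gmul_neq0 [x [y [Px Qy ->]]]; apply: nlex_leD (lp.2 x Px) (lq.2 y Qy).
Qed.

Lemma gcoef_gone g : gcoef (gone k) g = (g == 0)%:R.
Proof. by rewrite /gcoef /gone big_cons big_nil /= eq_sym; case: eqP; rewrite ?addr0. Qed.

Lemma gcoef_gbinom (c : expo k) g : gcoef (gbinom c) g = (g == 0)%:R - (g == c)%:R.
Proof.
rewrite /gcoef /gbinom !big_cons big_nil /= addr0 (eq_sym 0) (eq_sym c).
by case: eqP; case: eqP; rewrite ?subr0 ?addr0 ?add0r ?sub0r.
Qed.

Lemma lead_exp_gone n : lead_exp n (gone k) 0.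
Proof.
split=> [|g]; rewrite gcoef_gone ?eqxx //.
by have [-> _|] := eqVneq g 0; rewrite /nlex_le ?eqxx.
Qed.

Lemma lead_exp_gbinom n (c : expo k) : c != 0 -> 0 <= c 0 n ->
  exists2 p, lead_exp n (gbinom c) p & p 0 n = c 0 n.
Proof.
move=> c0 cn.
have supp g : gcoef (gbinom c) g != 0 -> (g == 0) || (g == c).
  by rewrite gcoef_gbinom; case: (g == 0); case: (g == c); rewrite ?subrr.
have [l0c|nl0c] := boolP (nlex_lt n 0 c).
  exists c => //; split=> [|g /supp /orP[]/eqP->]; rewrite /nlex_le ?eqxx ?l0c ?orbT //.
  by rewrite gcoef_gbinom eqxx (negbTE c0).
have lc0 : nlex_lt n c 0 by have := nlex_lt_total n c0; rewrite (negbTE nl0c) orbF.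
exists 0.
  split=> [|g /supp /orP[]/eqP->]; rewrite /nlex_le ?eqxx ?lc0 ?orbT //.
  by rewrite gcoef_gbinom eqxx (eq_sym 0 c) (negbTE c0).
have := @nlex_le_coord k n c 0; rewrite /nlex_le lc0 orbT mxE => /(_ isT) cn0.
by apply/eqP; rewrite eq_le cn cn0.
Qed.

Lemma lead_exp_gprod_gbinom n (cs : seq (expo k)) :
  (forall c, c \in cs -> c != 0 /\ 0 <= c 0 n) ->
  exists2 p, lead_exp n (gprod (map (@gbinom k) cs)) p & p 0 n = \sum_(c <- cs) c 0 n.
Proof.
elim: cs => [_|c cs IH cs_ok]; first by exists 0; [exact: lead_exp_gone | rewrite big_nil mxE].
have [c' c'cs|p lp pn] := IH; first by apply: cs_ok; rewrite inE c'cs orbT.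
have [c0 cn] := cs_ok c (mem_head _ _).
have [q lq qn] := lead_exp_gbinom c0 cn.
by exists (q + p); [exact: lead_exp_gmul lq lp | rewrite big_cons mxE qn pn].
Qed.

(* If [D * A] has [t_n]-degree below the leading [t_n]-exponent of [A], then
   the leading term of [D] times that of [A] would violate it unless [D] has
   negative [t_n]-degree. *)
Lemma neg_deg_of_gmul_lead n D A a : lead_exp n A a ->
  (forall g, gcoef (gmul D A) g != 0 -> g 0 n < a 0 n) ->
  forall g, gcoef D g != 0 -> g 0 n < 0.
Proof.
move=> la degDA g Dg; rewrite ltNge; apply/negP => g0.
have [p lp] := lead_exp_exists n Dg.
have := degDA _ (lead_exp_gmul lp la).1; rewrite mxE -ltrBrDr subrr.
by rewrite ltNge (le_trans g0 (nlex_le_coord (lp.2 g Dg))).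
Qed.

Lemma gmul_deg_lt_lead n X A a : lead_exp n A a ->
  (forall x, gcoef X x != 0 -> x 0 n < 0) ->
  forall g, gcoef (gmul X A) g != 0 -> g 0 n < a 0 n.
Proof.
move=> la degX g /gcoef_gmul_neq0 [x [y [Xx Ay ->]]].
by rewrite mxE -[a 0 n]add0r ltr_leD ?degX ?(nlex_le_coord (la.2 y Ay)).
Qed.

Lemma neg_deg_sub_filter n A a R P Pp (pr : pred (expo k)) : lead_exp n A a ->
  (forall g, gcoef (gsub R (gmul P A)) g != 0 -> g 0 n < a 0 n) ->
  (forall g, gcoef (gsub R (gmul Pp A)) g != 0 -> g 0 n < a 0 n) ->
  (forall x, ~~ pr x -> x 0 n < 0) ->
  forall g, gcoef (gsub P (filter (fun m => pr m.1) Pp)) g != 0 -> g 0 n < 0.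
Proof.
move=> la degP degPp prN; apply: (neg_deg_of_gmul_lead la) => g.
rewrite gcoef_gmulBl.
have -> : gcoef (gmul P A) g - gcoef (gmul (filter (fun m => pr m.1) Pp) A) g =
   gcoef (gsub R (gmul Pp A)) g - gcoef (gsub R (gmul P A)) g
   + gcoef (gmul (filter (fun m => ~~ pr m.1) Pp) A) g.
  by rewrite !gcoef_gsub (gcoef_gmul_filterU Pp A pr g); ring.
have [->|] := eqVneq (gcoef (gsub R (gmul Pp A)) g) 0; last by move=> /degPp.
have [->|] := eqVneq (gcoef (gsub R (gmul P A)) g) 0; last by move=> /degP.
rewrite subrr add0r; apply: (gmul_deg_lt_lead la) => x.
by rewrite (gcoef_filter Pp (fun y => ~~ pr y)); case: ifP => // /prN.
Qed.

End GeneralizedPolynomials.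

Section NegativeDefinite.
Variable k : nat.
Variable M : 'M[rat]_k.
Hypothesis M_offdiag_ge0 : forall i j, i != j -> 0 <= M i j.
Hypothesis M_neg_def : neg_def M.

Lemma neg_def_unitmx : M \in unitmx.
Proof.
rewrite unitmxE unitfE; apply/negP => /det0P [v v0 vM].
by have := M_neg_def v0; rewrite vM mul0mx mxE ltxx.
Qed.

(* Write [x = p - q] with [p, q] its positive and negative parts.  They have
   disjoint supports, so [q M p^T >= 0] uses only off-diagonal entries, and
   [p M p^T = p_v + q M p^T >= 0] forces [p = 0]. *)
Lemma neg_def_solution_sign v (x : 'rV[rat]_k) : x *m M = delta_mx 0 v ->
  (forall w, x 0 w <= 0) /\ x 0 v < 0.
Proof.
move=> xM.
have xMb (b : 'rV[rat]_k) : (x *m M *m b^T) 0 0 = b 0 v.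
  rewrite xM mxE (bigD1 v) //= !mxE !eqxx mul1r big1 ?addr0 // => j jv.
  by rewrite !mxE (negbTE jv) andbF mul0r.
have x0 : x != 0.
  apply/eqP => x0; have /rowP/(_ v)/eqP := xM.
  by rewrite x0 mul0mx !mxE !eqxx.
split; last by rewrite -xMb; exact: M_neg_def.
pose p := \row_i Num.max (x 0 i) 0; pose q := \row_i Num.max (- x 0 i) 0.
have xE : x = p - q.
  apply/rowP => i; rewrite !mxE; case: (lerP 0 (x 0 i)) => xi.
    by rewrite (max_idPr _) ?subr0 // oppr_le0.
  by rewrite (max_idPl _) ?opprK ?add0r // oppr_ge0 ltW.
have qMp_ge0 : 0 <= (q *m M *m p^T) 0 0.
  rewrite !mxE; apply: sumr_ge0 => j _; rewrite !mxE mulr_suml.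
  apply: sumr_ge0 => i _; rewrite !mxE.
  have [<-|ij] := eqVneq i j; last by rewrite !mulr_ge0 ?M_offdiag_ge0 // le_max lexx orbT.
  case: (lerP 0 (x 0 i)) => xi; last by rewrite mulr0.
  by rewrite (max_idPr (_ : - x 0 i <= 0)) ?mul0r // oppr_le0.
have pMp_ge0 : 0 <= (p *m M *m p^T) 0 0.
  have := xMb p; rewrite xE !mulmxBl.
  set a := p *m M *m p^T; set b := q *m M *m p^T.
  rewrite [(a - b) 0 0]mxE [(- b) 0 0]mxE => /eqP; rewrite subr_eq => /eqP ->.
  by apply: addr_ge0 qMp_ge0; rewrite mxE le_max lexx orbT.
have p0 : p = 0 by apply/eqP; apply: contraTT pMp_ge0 => /M_neg_def; rewrite -ltNge.
move=> w; have /rowP/(_ w)/eqP := p0; rewrite !mxE.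
by case: (lerP 0 (x 0 w)) => xw; [move/eqP->|rewrite ltW].
Qed.

Lemma row_invmx_mulmx v : row v (invmx M) *m M = delta_mx 0 v.
Proof. by rewrite -row_mul mulVmx ?neg_def_unitmx ?row1. Qed.

Lemma Estar_ge0 v w : 0 <= Estar M v 0 w.
Proof.
by rewrite mxE oppr_ge0 ((neg_def_solution_sign (row_invmx_mulmx v)).1 w).
Qed.

Lemma Estar_diag_gt0 v : 0 < Estar M v 0 v.
Proof. by rewrite mxE oppr_gt0 (neg_def_solution_sign (row_invmx_mulmx v)).2. Qed.

End NegativeDefinite.

Definition ind (b : bool) : int := if b then 1 else 0.

Lemma sum_ind (k : nat) (P : pred 'I_k) (F : 'I_k -> int) :
  \sum_(i | P i) F i = \sum_i ind (P i) * F i.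
Proof. by rewrite big_mkcond; apply: eq_bigr => i _; case: (P i); rewrite ?mul1r ?mul0r. Qed.

Section OrientedTreeCount.
Variable k : nat.
Variables (edge arc : rel 'I_k) (N : {set 'I_k}) (root : 'I_k) (X : pred 'I_k).
Hypothesis root_in : root \in N.
Hypothesis edge_in : forall n n', edge n n' -> n \in N.
Hypothesis edge_sym : symmetric edge.
Hypothesis arc_edge : subrel arc edge.
Hypothesis arc_orient : forall n n', edge n n' -> arc n n' = ~~ arc n' n.
Hypothesis card_out_arcs : forall n, n \in N -> #|[set n' | arc n n']| = (n != root).

Let sum_arcs (F : 'I_k -> 'I_k -> int) := \sum_n \sum_(n' | arc n n') F n n'.

Lemma arc_src_in n n' : arc n n' -> n \in N.
Proof. by move/arc_edge/edge_in. Qed.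

Lemma arc_tgt_in n n' : arc n n' -> n' \in N.
Proof. by move/arc_edge; rewrite edge_sym => /edge_in. Qed.

Lemma edge_irr n : edge n n = false.
Proof. by apply/negP => nn; have := arc_orient nn; case: (arc n n). Qed.

Lemma ind_edge n n' : ind (edge n n') = ind (arc n n') + ind (arc n' n).
Proof.
have [e_nn'|ne_nn'] := boolP (edge n n'); first by rewrite (arc_orient e_nn'); case: (arc n' n).
rewrite (contraNF (@arc_edge n n') ne_nn') (contraNF (@arc_edge n' n)) //.
by rewrite edge_sym.
Qed.

Lemma sum_edges_arcs (F : 'I_k -> 'I_k -> int) : (forall n n', F n n' = F n' n) ->
  \sum_n \sum_(n' | edge n n' && (n < n')%N) F n n' = sum_arcs F.
Proof.
move=> Fsym; rewrite /sum_arcs.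
transitivity (\sum_n \sum_n' (ind (arc n n') * ind (n < n')%N * F n n'
                            + ind (arc n' n) * ind (n < n')%N * F n n')).
  apply: eq_bigr => n _; rewrite sum_ind; apply: eq_bigr => n' _.
  rewrite -!mulrDl -ind_edge.
  by case: (edge n n'); case: (n < n')%N; rewrite ?mulr0 ?mul0r ?mulr1.
under eq_bigr => n _ do rewrite big_split /=.
rewrite big_split /= [X in _ + X]exchange_big /= -big_split /=.
apply: eq_bigr => n _; rewrite [RHS]sum_ind -big_split /=.
apply: eq_bigr => n' _; rewrite (Fsym n' n).
have [a_nn'|_] := boolP (arc n n'); last by rewrite /= !mul0r addr0.
have nn' : n != n' by apply: contraTneq (arc_edge a_nn') => ->; rewrite edge_irr.
case: ltngtP => [_|_|/val_inj/eqP]; rewrite /= ?mul1r ?mul0r ?addr0 ?add0r //.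
by rewrite (negbTE nn').
Qed.

Lemma sum_arcs_tail (G : 'I_k -> int) :
  sum_arcs (fun n _ => G n) = \sum_(n in N) G n - G root.
Proof.
rewrite /sum_arcs (bigID (mem N)) /= [X in _ + X]big1 => [|n nN]; last first.
  by apply: big1 => n' /arc_src_in; rewrite (negbTE nN).
have out_sum n : n \in N -> \sum_(n' | arc n n') G n = (n != root)%:R * G n.
  by move=> nN; rewrite sumr_const -card_out_arcs // mulr_natl cardsE.
rewrite addr0 (bigD1 root) //= [in RHS](bigD1 root) //= addrAC subrr add0r.
rewrite out_sum // eqxx mul0r add0r; apply: eq_bigr => n /andP[nN nroot].
by rewrite out_sum // nroot mul1r.
Qed.

Lemma sum_valency (G : 'I_k -> int) :
  \sum_(n in N) #|[set n' | edge n n']|%:Z * G n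
    = sum_arcs (fun n _ => G n) + sum_arcs (fun _ n' => G n').
Proof.
have sum_arcsE F : sum_arcs F = \sum_n \sum_n' ind (arc n n') * F n n'.
  by apply: eq_bigr => n _; rewrite sum_ind.
rewrite !sum_arcsE [X in _ + X]exchange_big /= -big_split /=.
rewrite [RHS](bigID (mem N)) /= [X in _ + X]big1 => [|n nN]; last first.
  rewrite -big_split big1 // => n' _ /=.
  by rewrite (contraNF (@arc_src_in n n') nN) (contraNF (@arc_tgt_in n' n) nN) !mul0r addr0.
rewrite addr0; apply: eq_bigr => n _.
have -> : #|[set n' | edge n n']|%:Z = \sum_n' ind (edge n n').
  rewrite -(eq_bigr _ (fun i _ => mulr1 (ind (edge n i)))) -sum_ind sumr_const cardsE.
  by rewrite natz.
by rewrite mulr_suml -big_split; apply: eq_bigr => n' _; rewrite /= -mulrDl -ind_edge.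
Qed.

Lemma tree_inclusion_exclusion :
  \sum_n \sum_(n' | edge n n' && (n < n')%N) ind (X n || X n')
  - \sum_(n in N) (#|[set n' | edge n n']|%:Z - 1) * ind (X n)
  = ind (X root) + sum_arcs (fun n n' => ind (X n && ~~ X n')).
Proof.
rewrite sum_edges_arcs => [|n n']; last by rewrite orbC.
set S := sum_arcs (fun n n' => ind (X n && X n')).
have -> : sum_arcs (fun n n' => ind (X n || X n')) =
    sum_arcs (fun n _ => ind (X n)) + sum_arcs (fun _ n' => ind (X n')) - S.
  rewrite /S /sum_arcs -big_split -sumrB; apply: eq_bigr => n _.
  rewrite -big_split -sumrB; apply: eq_bigr => n' _.
  by case: (X n); case: (X n').
have -> : sum_arcs (fun n n' => ind (X n && ~~ X n')) =
    sum_arcs (fun n _ => ind (X n)) - S.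
  rewrite /S /sum_arcs -sumrB; apply: eq_bigr => n _.
  rewrite -sumrB; apply: eq_bigr => n' _.
  by case: (X n); case: (X n').
under eq_bigr => n _ do rewrite mulrBl mul1r.
rewrite sumrB sum_valency sum_arcs_tail; ring.
Qed.

End OrientedTreeCount.

Definition edges (k : nat) (r : rel 'I_k) : {set 'I_k * 'I_k} :=
  [set p : 'I_k * 'I_k | r p.1 p.2 && (p.1 < p.2)%N].

(* [d x] is the length of a shortest [r]-path from [x] to [z]. *)
Lemma connect_descent (k : nat) (r : rel 'I_k) (z : 'I_k) :
  (forall x, connect r x z) ->
  exists (par : 'I_k -> 'I_k) (d : 'I_k -> nat),
    forall x, x != z -> r x (par x) && (d (par x) < d x)%N.
Proof.
move=> to_z.
pose reach x j := [exists t : j.-tuple 'I_k, path r x t && (last x t == z)].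
have reach_ex x : exists j, reach x j.
  have /connectP [p pp lp] := to_z x.
  by exists (size p); apply/existsP; exists (in_tuple p); rewrite /= pp -lp eqxx.
pose d x := ex_minn (reach_ex x).
have d_min x j : reach x j -> (d x <= j)%N.
  by rewrite /d; case: (ex_minnP (reach_ex x)) => m _ min_m /min_m.
have d_reach x : reach x (d x) by rewrite /d; case: (ex_minnP (reach_ex x)).
have step x : x != z -> exists2 y, r x y & (d y < d x)%N.
  move=> xz; have/existsP [t /andP[pt /eqP lt]] := d_reach x.
  have st := size_tuple t; move: (tval t) st pt lt => [|y s] /= st.
    by move=> _ xz'; rewrite xz' eqxx in xz.
  case/andP=> rxy ps ls; exists y => //; rewrite -st ltnS d_min //.
  by apply/existsP; exists (in_tuple s); rewrite /= ps ls eqxx.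
exists (fun x => odflt z [pick y | r x y & (d y < d x)%N]), d => x xz.
by case: pickP => [y //|none]; have [y rxy dy] := step x xz; have := none y; rewrite rxy dy.
Qed.

(* Each vertex other than a root [z] is sent to the edge towards its parent
   in a descent to [z]; this map is injective. *)
Lemma card_edges_connected (k : nat) (r : rel 'I_k) : symmetric r ->
  (forall u v, connect r u v) -> (k.-1 <= #|edges r|)%N.
Proof.
move=> r_sym r_conn; case: k r r_sym r_conn => // k r r_sym r_conn.
have [par [d par_desc]] := connect_descent (fun x => r_conn x ord0).
pose f (x : 'I_k.+1) := if (x < par x)%N then (x, par x) else (par x, x).
have f_inj : {in [set~ ord0] &, injective f}.
  move=> x x'; rewrite !inE => /par_desc /andP[_ dx] /par_desc /andP[_ dx'].
  rewrite /f; do 2 case: ifP => _; case=> e1 e2 //.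
  - by move: dx'; rewrite -e1 -e2 => /(ltn_trans dx); rewrite ltnn.
  - by move: dx; rewrite e1 e2 => /(ltn_trans dx'); rewrite ltnn.
have f_edges : [set f x | x in [set~ ord0]] \subset edges r.
  apply/subsetP => p /imsetP [x]; rewrite !inE => /par_desc /andP[rx dx] ->.
  have x_par : val x != val (par x).
    by apply: contraTneq dx => /val_inj <-; rewrite ltnn.
  rewrite /f; case: ifP => lt_x /=; first by rewrite rx lt_x.
  by rewrite r_sym rx /= ltn_neqAle eq_sym x_par leqNgt lt_x.
by have := subset_leq_card f_edges; rewrite card_in_imset // cardsC1 card_ord.
Qed.

Lemma connect_uniq_path (T : finType) (e : rel T) x y : connect e x y ->
  exists2 p, path e x p & uniq (x :: p) /\ last x p = y.
Proof. by case/connectP => p pp ->; case: (shortenP pp) => p' pp' up' _; exists p'. Qed.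

Section Tree.
Variable k : nat.
Variable adj : rel 'I_k.
Hypothesis adj_sym : symmetric adj.
Hypothesis adj_irr : irreflexive adj.
Hypothesis adj_conn : forall u v, connect adj u v.
Hypothesis card_edges_adj : #|edges adj| = k.-1.

Definition adjD (u w : 'I_k) := [rel x y | adj x y &&
   ~~ (((x == u) && (y == w)) || ((x == w) && (y == u)))].

(* Removing an edge leaves [k - 2] edges, too few to connect [k] vertices. *)
Lemma tree_cut_edge u w : adj u w -> ~~ connect (adjD u w) u w.
Proof.
move=> auw; apply/negP => C.
have adjD_sym : symmetric (adjD u w).
  move=> x y /=; rewrite adj_sym.
  by case: (x == u); case: (x == w); case: (y == u); case: (y == w).
have adjD_conn a b : connect (adjD u w) a b.
  apply: connect_sub (adj_conn a b) => x y axy.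
  have [/orP[]/andP[/eqP-> /eqP->] //|uw_xy] :=
    boolP (((x == u) && (y == w)) || ((x == w) && (y == u))).
    by rewrite sym_connect_sym.
  by apply: connect1; rewrite /= axy uw_xy.
have uw : val u != val w by apply: contraTneq auw => /val_inj->; rewrite adj_irr.
have edges_proper : edges (adjD u w) \proper edges adj.
  apply/properP; split.
    by apply/subsetP => p; rewrite !inE /= => /andP[/andP[-> _] ->].
  exists (if (u < w)%N then (u, w) else (w, u)).
    case: ifP => lt_uw; rewrite inE /= ?auw ?lt_uw //.
    by rewrite adj_sym auw /= ltn_neqAle eq_sym uw leqNgt lt_uw.
  by case: ifP => _; rewrite inE /= !eqxx /= ?orbT ?andbF.
have := leq_ltn_trans (card_edges_connected adjD_sym adjD_conn) (proper_card edges_proper).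
by rewrite card_edges_adj ltnn.
Qed.

Definition avoid (v : 'I_k) := [rel x y | [&& adj x y, x != v & y != v]].

Lemma avoid_sym v : symmetric (avoid v).
Proof. by move=> x y /=; rewrite adj_sym; congr (_ && _); rewrite andbC. Qed.

Lemma connect_avoidC v x y : connect (avoid v) x y = connect (avoid v) y x.
Proof. exact: sym_connect_sym (@avoid_sym v) x y. Qed.

Lemma path_avoid v x s : path adj x s -> v \notin x :: s -> path (avoid v) x s.
Proof.
elim: s x => //= y s IH x /andP[axy ps]; rewrite !inE !negb_or => /and3P[xv yv sv].
by rewrite axy eq_sym xv eq_sym yv IH // inE negb_or yv.
Qed.

Lemma avoid_path v x s : path (avoid v) x s -> path adj x s /\ v \notin s.
Proof.
elim: s x => //= y s IH x /andP[/and3P[axy _ yv] ps]; have [-> sv] := IH _ ps.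
by rewrite axy inE negb_or eq_sym yv.
Qed.

Lemma connect_avoid v x s : path adj x s -> v \notin x :: s ->
  connect (avoid v) x (last x s).
Proof. by move=> ps vs; apply/connectP; exists s => //; apply: path_avoid. Qed.

Lemma connect_avoid_adjD v w x y : connect (avoid v) x y -> connect (adjD v w) x y.
Proof.
apply: connect_sub => a b /and3P[ab av bv]; apply: connect1.
by rewrite /= ab (negbTE av) (negbTE bv) /= andbF.
Qed.

(* If [v] did not separate the ends of the path, its two path neighbours
   would still be joined after cutting one of the two path edges at [v]. *)
Lemma path_cut_vertex x s v : path adj x s -> uniq (x :: s) -> v \in s ->
  v != last x s -> ~~ connect (avoid v) x (last x s).
Proof.
move=> ps us vs vl; apply/negP => C.
case/splitPr: vs ps us vl C => s1 s2.
rewrite cat_path => /andP[p1 /= /andP[auv p2]].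
case: s2 p2 => [|w s2]; first by rewrite last_cat /= eqxx.
move=> /andP[avw p2] us _; rewrite last_cat /= => C.
have : uniq ((x :: s1) ++ v :: w :: s2) := us; rewrite cat_uniq => /and3P[_ hs /andP[vs2 _]].
have vx1 : v \notin x :: s1 by apply: contra hs => h; apply/hasP; exists v; rewrite ?mem_head.
have uw : last x s1 != w.
  apply: contra hs => /eqP e; apply/hasP; exists w; first by rewrite !inE eqxx orbT.
  by rewrite -e mem_last.
have vw : v != w by apply: contra vs2 => /eqP->; rewrite mem_head.
have C1 : connect (avoid v) (last x s1) w.
  apply: connect_trans (connect_trans C _); first by rewrite connect_avoidC connect_avoid.
  by rewrite connect_avoidC connect_avoid // inE.
have avu : adj v (last x s1) by rewrite adj_sym.
case/negP: (tree_cut_edge avu); apply: (@connect_trans _ _ w); last by rewrite connect_avoid_adjD // connect_avoidC.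
apply: connect1; rewrite /= avw eqxx /= (eq_sym w) (negbTE uw) /=.
by rewrite (eq_sym w) (negbTE vw) andbF.
Qed.

Definition chain n t n' := [&& path adj n (rcons t n'), uniq (n :: rcons t n') &
   all (fun w => valency adj w == 2) t].

Lemma path_rcons_head a t y : path adj a (rcons t y) -> adj a (head y t).
Proof. by case: t => [|c t] /= /andP[]. Qed.

Lemma head_rcons_mem t (y : 'I_k) : head y t \in rcons t y.
Proof. by case: t => [|c t]; rewrite /= ?mem_head. Qed.

Lemma path_interior_neighbours x t y a :
  path adj x (rcons t y) -> uniq (x :: rcons t y) -> a \in t ->
  exists b1 b2, [/\ adj a b1, adj a b2, b1 != b2,
     b1 \in x :: rcons t y & b2 \in x :: rcons t y].
Proof.
move=> pt ut at_; case/splitPr: at_ pt ut => t1 t2.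
rewrite rcons_cat rcons_cons cat_path => /andP[_ /= /andP[a1 a2]] ut.
have : uniq ((x :: t1) ++ a :: rcons t2 y) := ut; rewrite cat_uniq => /and3P[_ hs _].
exists (last x t1), (head y t2); split.
- by rewrite adj_sym.
- exact: path_rcons_head a2.
- apply: contra hs => /eqP e; apply/hasP; exists (head y t2).
    by rewrite inE head_rcons_mem orbT.
  by rewrite -e mem_last.
- by have := mem_last x t1; rewrite !inE mem_cat => /orP[->|->]; rewrite ?orbT.
- by rewrite !inE mem_cat inE head_rcons_mem !orbT.
Qed.

Lemma valency_ge2 a b1 b2 : adj a b1 -> adj a b2 -> b1 != b2 -> (2 <= valency adj a)%N.
Proof.
move=> ab1 ab2 b12.
have sub : [set b1; b2] \subset [set w | adj a w].
  by apply/subsetP => b; rewrite !inE => /orP[]/eqP->.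
by have := subset_leq_card sub; rewrite cards2 b12.
Qed.

Lemma valency2_neighbours a b1 b2 : valency adj a = 2 -> adj a b1 -> adj a b2 ->
  b1 != b2 -> forall b, adj a b -> (b == b1) || (b == b2).
Proof.
move=> val2 ab1 ab2 b12 b ab.
have /eqP nbrs : [set b1; b2] == [set w | adj a w].
  move: val2; rewrite eqEcard cards2 b12 /valency => ->; rewrite andbT.
  by apply/subsetP => c; rewrite !inE => /orP[]/eqP->.
have : b \in [set w | adj a w] by rewrite inE.
by rewrite -nbrs !inE.
Qed.

Lemma chainI n t m : path adj n (rcons t m) -> uniq (n :: rcons t m) ->
  {in t, forall a, a \notin nodes adj} -> chain n t m.
Proof.
move=> pt ut t_nodeN; apply/and3P; split=> //; apply/allP => a at_.
have [b1 [b2 [ab1 ab2 b12 _ _]]] := path_interior_neighbours pt ut at_.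
move: (t_nodeN a at_); rewrite inE -ltnNge ltnS => val_le2.
by rewrite eqn_leq val_le2 (valency_ge2 ab1 ab2 b12).
Qed.

Lemma chain_interior_adj n t n' a b : chain n t n' -> a \in t -> adj a b ->
  b \in n :: rcons t n'.
Proof.
case/and3P=> pt ut /allP val2 at_ ab.
have [b1 [b2 [ab1 ab2 b12 b1t b2t]]] := path_interior_neighbours pt ut at_.
by case/orP: (valency2_neighbours (eqP (val2 a at_)) ab1 ab2 b12 ab) => /eqP->.
Qed.

Lemma chain_interior_trap n t n' : chain n t n' -> forall q a, a \in t ->
  path adj a q -> n \notin q -> n' \notin q -> last a q \in t.
Proof.
move=> ch; elim=> //= b q IH a at_ /andP[ab pq].
rewrite !inE !negb_or => /andP[bn nq] /andP[bn' n'q]; apply: IH => //.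
move: (chain_interior_adj ch at_ ab).
by rewrite inE mem_rcons inE (eq_sym b n) (negbTE bn) (eq_sym b n') (negbTE bn').
Qed.

Lemma chain_nodeN n t n' v : chain n t n' -> v \in nodes adj -> v \notin t.
Proof. by case/and3P=> _ _ /allP val2; rewrite inE; apply: contraL => /val2 /eqP->. Qed.

Lemma chain_neq n t n' : chain n t n' -> n != n'.
Proof.
case/and3P=> _ /= /andP[nt _] _; apply: contra nt => /eqP->.
by rewrite mem_rcons mem_head.
Qed.

Lemma chain_rev n t n' : chain n t n' -> chain n' (rev t) n.
Proof.
case/and3P=> pt ut val2; apply/and3P; split; last by rewrite all_rev.
- have := rev_path adj n (rcons t n'); rewrite last_rcons belast_rcons rev_cons => ->.
  by rewrite (eq_path (e' := adj)) // => x y; rewrite adj_sym.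
- by rewrite -rev_cons -rev_rcons rcons_cons rev_uniq.
Qed.

Lemma chain_connect_avoid n t n' v : chain n t n' -> v \in nodes adj ->
  v != n -> v != n' -> connect (avoid v) n n'.
Proof.
move=> ch vN vn vn'; have := chain_nodeN ch vN.
case/and3P: ch => pt _ _ vt; have := connect_avoid pt; rewrite last_rcons; apply.
by rewrite inE mem_rcons inE !negb_or vn vn' vt.
Qed.

Lemma orb_adjP n n' : orb_adj adj n n' ->
  [/\ n \in nodes adj, n' \in nodes adj & exists t, chain n t n'].
Proof. by case/and3P=> nN n'N /existsP [m /existsP [t ch]]; split => //; exists (tval t). Qed.

Lemma orb_adjI n n' t : n \in nodes adj -> n' \in nodes adj -> chain n t n' ->
  orb_adj adj n n'.
Proof.
move=> nN n'N ch; apply/and3P; split => //.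
have size_t : (size t < k)%N.
  case/and3P: ch => _ ut _.
  have : (size (n :: rcons t n') <= k)%N.
    by move/card_uniqP: ut => <-; rewrite -[X in (_ <= X)%N]card_ord max_card.
  by rewrite /= size_rcons => /ltnW.
by apply/existsP; exists (Ordinal size_t); apply/existsP; exists (in_tuple t).
Qed.

Lemma orb_adj_sym : symmetric (orb_adj adj).
Proof.
by move=> n n'; apply/idP/idP => /orb_adjP [nN n'N [t /chain_rev ch]]; apply: orb_adjI ch.
Qed.

Lemma orb_adj_neq n n' : orb_adj adj n n' -> n != n'.
Proof. by case/orb_adjP => _ _ [t /chain_neq]. Qed.

Lemma chain_head_connect n t n' : chain n t n' -> connect (avoid n) n' (head n' t).
Proof.
case: t => [|c t] ch; first exact: connect0.
case/and3P: ch => /= /andP[_ pt] /andP[nt _] _.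
by rewrite connect_avoidC; have := connect_avoid pt nt; rewrite last_rcons.
Qed.

Lemma chain_head_path_last n t n' q : chain n t n' -> path adj (head n' t) q ->
  n \notin q -> n' \notin head n' t :: q -> last (head n' t) q \in t.
Proof.
case: t => [|c t] ch pq nq; first by rewrite mem_head.
rewrite inE negb_or => /andP[_ n'q].
by apply: (chain_interior_trap ch) => //; rewrite mem_head.
Qed.

Section Orientation.
Variable n0 : 'I_k.
Hypothesis n0_node : n0 \in nodes adj.

Lemma connect_avoid_either n n' : n != n' ->
  connect (avoid n') n n0 || connect (avoid n) n' n0.
Proof.
move=> nn'; have [p pp [up lp]] := connect_uniq_path (adj_conn n n0).
have [|n'p] := boolP (n' \in n :: p); last by rewrite -lp connect_avoid.
rewrite inE eq_sym (negbTE nn') /= => n'p; case/splitPr: n'p pp up lp => p1 p2.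
rewrite cat_path last_cat => /andP[_ /andP[_ pp2]] up <-.
move: up; rewrite /= mem_cat negb_or => /andP[/andP[_ np2] _].
by rewrite connect_avoid ?orbT.
Qed.

(* Otherwise the edge from [n] to the head of the chain lies on a cycle
   [n -> ... -> n0 -> ... -> n' -> ... -> n], contradicting [tree_cut_edge]. *)
Lemma chain_connect_avoid_both n n' t : chain n t n' -> n0 != n ->
  connect (avoid n') n n0 -> ~~ connect (avoid n) n' n0.
Proof.
move=> ch n0n /connect_uniq_path [[|b q] pq [uq lq]]; first by rewrite -lq eqxx in n0n.
apply/negP => n'_n0.
move: pq uq lq => /= /andP[/and3P[anb _ bn'] /avoid_path [pbq n'q]].
case/andP=> nbq _ lq.
have nq : n \notin q by apply: contra nbq => nq; rewrite inE nq orbT.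
set tau := head n' t.
have b_tau : b != tau.
  apply: contraNneq (chain_nodeN ch n0_node) => btau; rewrite -lq btau.
  rewrite btau in pbq; apply: (chain_head_path_last ch) => //.
  by rewrite inE negb_or n'q andbT -/tau -btau eq_sym.
have ant : adj n tau by case/and3P: ch => /path_rcons_head.
have b_tau_avoid : connect (avoid n) b tau.
  apply: (@connect_trans _ _ n0); first by rewrite -lq connect_avoid.
  by apply: (@connect_trans _ _ n') (chain_head_connect ch); rewrite connect_avoidC.
case/negP: (tree_cut_edge ant); apply: (@connect_trans _ _ b).
  apply: connect1; rewrite /= anb eqxx /= (negbTE b_tau) /=.
  by apply/negP => /andP[/eqP ntau _]; rewrite ntau adj_irr in ant.
exact: connect_avoid_adjD.
Qed.

Lemma orientedE n n' : oriented adj n0 n n' =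
  orb_adj adj n n' && ((n' == n0) || ~~ connect (avoid n') n n0).
Proof. by []. Qed.

Lemma oriented_asym n n' : orb_adj adj n n' ->
  oriented adj n0 n n' = ~~ oriented adj n0 n' n.
Proof.
move=> nn'_edge; have nn' := orb_adj_neq nn'_edge; have [_ _ [t ch]] := orb_adjP nn'_edge.
rewrite !orientedE nn'_edge -orb_adj_sym nn'_edge /=.
have [n'0|n'n0] := eqVneq n' n0; first by rewrite n'0 connect0 orbF /= -n'0 nn'.
have [->|nn0] := eqVneq n n0; first by rewrite connect0.
have := connect_avoid_either nn'.
have [C1 _|_ /= -> //] := boolP (connect (avoid n') n n0).
by rewrite (negbTE (chain_connect_avoid_both ch _ C1)) // eq_sym.
Qed.

Lemma connect_avoid_chain_path n a b s : orb_adj adj n b -> a \in nodes adj ->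
  a != n -> a != b -> path adj b s -> a \notin b :: s -> last b s = n0 ->
  connect (avoid a) n n0.
Proof.
move=> /orb_adjP [_ _ [t ch]] aN an ab ps abs <-.
exact: connect_trans (chain_connect_avoid ch aN an ab) (connect_avoid ps abs).
Qed.

Lemma separator_mem_path n a p : path adj n p -> last n p = n0 -> a != n ->
  ~~ connect (avoid a) n n0 -> a \in p.
Proof.
move=> pp lp an; apply: contraR => ap.
by rewrite -lp connect_avoid // inE negb_or an.
Qed.

(* Both [n1] and [n2] separate [n] from [n0], so both lie on the path from [n]
   to [n0]; the chain to the farther one avoids the nearer one. *)
Lemma oriented_uniq n n1 n2 : oriented adj n0 n n1 -> oriented adj n0 n n2 -> n1 = n2.
Proof.
rewrite !orientedE => /andP[e1 sep1] /andP[e2 sep2]; apply/eqP/negPn/negP => n12.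
have [nN n1N [t1 ch1]] := orb_adjP e1; have [_ n2N [t2 ch2]] := orb_adjP e2.
have nn1 := orb_adj_neq e1; have nn2 := orb_adj_neq e2.
have [n10|n10] := eqVneq n1 n0.
  move: sep2; rewrite -n10 eq_sym (negbTE n12) /= => /negP; apply.
  by apply: (chain_connect_avoid ch1 n2N); rewrite eq_sym.
have [n20|n20] := eqVneq n2 n0.
  move: sep1; rewrite -n20 (negbTE n12) /= => /negP; apply.
  by apply: (chain_connect_avoid ch2 n1N); rewrite // eq_sym.
rewrite (negbTE n10) /= in sep1; rewrite (negbTE n20) /= in sep2.
have n2n : n2 != n by rewrite eq_sym.
have [p pp [up lp]] := connect_uniq_path (adj_conn n n0).
have n2p := separator_mem_path pp lp n2n sep2; case/splitPr: n2p pp up lp => s1 s2.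
rewrite cat_path last_cat /= => /andP[_ /andP[_ ps2]] up lp.
have : uniq ((n :: s1) ++ n2 :: s2) := up; rewrite cat_uniq => /and3P[_ _ /andP[n2s2 _]].
have [n1s2|n1s2] := boolP (n1 \in s2).
  case/splitPr: n1s2 ps2 lp n2s2 => u1 u2; rewrite cat_path last_cat /=.
  move=> /andP[_ /andP[_ pu2]] lp; rewrite mem_cat inE !negb_or => /and3P[_ n21 n2u2].
  case/negP: sep2; apply: (connect_avoid_chain_path (s := u2) e1 n2N) => //.
  by rewrite inE negb_or n21.
case/negP: sep1; apply: (connect_avoid_chain_path (s := s2) e2 n1N) => //.
- by rewrite eq_sym.
- by rewrite inE negb_or n12.
Qed.

Lemma oriented_exists n : n \in nodes adj -> n != n0 -> exists n1, oriented adj n0 n n1.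
Proof.
move=> nN nn0; have [p pp [up lp]] := connect_uniq_path (adj_conn n n0).
have n0p : n0 \in p by have := mem_last n p; rewrite lp inE eq_sym (negbTE nn0).
have has_node : has (mem (nodes adj)) p by apply/hasP; exists n0.
set j := find (mem (nodes adj)) p; have jp : (j < size p)%N by rewrite -has_find.
set n1 := nth n p j; set t := take j p.
have n1N : n1 \in nodes adj := nth_find n has_node.
have t_n1 : rcons t n1 = take j.+1 p by rewrite (take_nth n jp).
have ch : chain n t n1.
  apply: chainI; rewrite ?t_n1 ?take_path ?(take_uniq j.+2 up) // => a.
  case/(nthP n) => i; rewrite size_take jp => ij <-.
  by rewrite nth_take //; apply: negbT (before_find n ij).
exists n1; rewrite orientedE (orb_adjI nN n1N ch) /=.
have [//|n10] := eqVneq n1 n0; rewrite -lp /=.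
by apply: path_cut_vertex => //; rewrite ?mem_nth // lp.
Qed.

Lemma card_oriented n : n \in nodes adj ->
  #|[set n' | oriented adj n0 n n']| = (n != n0).
Proof.
move=> nN; have [->|nn0] := eqVneq n n0.
  apply/eqP; rewrite cards_eq0; apply/eqP/setP => x; rewrite !inE orientedE.
  have [e|] := boolP (orb_adj adj n0 x); rewrite //= connect0 orbF.
  by apply: contraNF (orb_adj_neq e) => /eqP->.
have [n1 o1] := oriented_exists nN nn0.
rewrite (_ : [set n' | oriented adj n0 n n'] = [set n1]) ?cards1 //.
by apply/setP => x; rewrite !inE; apply/idP/eqP => [ox|->//]; apply: oriented_uniq ox o1.
Qed.

Lemma orbifold_inclusion_exclusion (X : pred 'I_k) :
  \sum_n \sum_(n' | orb_adj adj n n' && (n < n')%N) ind (X n || X n')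
  - \sum_(n in nodes adj) ((orb_valency adj n)%:Z - 1) * ind (X n)
  = ind (X n0) + \sum_n \sum_(n' | oriented adj n0 n n') ind (X n && ~~ X n').
Proof.
apply: tree_inclusion_exclusion => //.
- by move=> n n' /orb_adjP [].
- exact: orb_adj_sym.
- by move=> n n' /andP[].
- exact: oriented_asym.
- exact: card_oriented.
Qed.

End Orientation.
End Tree.

Lemma intmat_offdiag_ge0 (k : nat) (adj : rel 'I_k) (e : 'I_k -> int) i j :
  i != j -> 0 <= intmat adj e i j.
Proof. by move=> ij; rewrite mxE (negbTE ij); case: (adj i j). Qed.

Section PolynomialParts.
Variables (k : nat) (adj : rel 'I_k) (M : 'M[rat]_k) (lam : 'I_k -> rat) (R Pplus : gpoly k).
Hypothesis M_offdiag_ge0 : forall i j, i != j -> 0 <= M i j.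
Hypothesis M_neg_def : neg_def M.
Hypothesis lam_gt0 : forall n, n \in nodes adj -> 0 < lam n.
Hypothesis Pplus_part : is_Pplus adj M lam R Pplus.

Lemma Aden_lead n : n \in nodes adj ->
  exists2 a, lead_exp n (Aden adj M lam) a & a 0 n = sumA adj M lam 0 n.
Proof.
move=> nN; have [c /mapP [n' n'N ->]|a la an] :=
    lead_exp_gprod_gbinom (n := n) (cs := map (avec adj M lam) (enum (nodes adj))).
  rewrite mem_enum in n'N; rewrite /avec /projN; split; last first.
    rewrite mxE; apply: mulr_ge0; first exact: ltW (lam_gt0 n'N).
    by rewrite mxE nN; apply: Estar_ge0.
  apply/eqP => /rowP/(_ n')/eqP; rewrite mxE [_ 0 n']mxE n'N [X in _ == X]mxE.
  by rewrite mulf_eq0 !gt_eqF ?lam_gt0 ?(Estar_diag_gt0 M_offdiag_ge0).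
exists a; first by rewrite -map_comp in la.
by rewrite an /sumA summxE big_map big_enum.
Qed.

(* Both [P] and the part of [P^+_h] selected by [pr] are polynomial parts of
   [f_h] in [t_n]; they can only differ in monomials of negative degree. *)
Lemma truncation_diff_neg n P (pr : pred (expo k)) : n \in nodes adj ->
  neg_deg adj M lam (minus_over adj M lam R P) n ->
  (forall x, ~~ pr x -> x 0 n < 0) ->
  forall g, gcoef P g != (if pr g then gcoef Pplus g else 0) -> g 0 n < 0.
Proof.
move=> nN P_neg prN g; have [a la an] := Aden_lead nN.
have [_ _ Pplus_neg] := Pplus_part.
rewrite -subr_eq0 -(gcoef_filter Pplus pr) -gcoef_gsub.
by apply: (neg_deg_sub_filter la) => // x; rewrite an; [apply: P_neg | apply: Pplus_neg].
Qed.

Lemma gcoef_Pn n P : n \in nodes adj -> is_Pn adj M lam R n P ->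
  forall g, gcoef P g = if 0 <= g 0 n then gcoef Pplus g else 0.
Proof.
move=> nN [_ P_ge0 P_neg] g; apply/eqP/negPn/negP => P_ne.
have prN (x : expo k) : ~~ (0 <= x 0 n) -> x 0 n < 0 by rewrite ltNge.
have gn := truncation_diff_neg (pr := fun x => 0 <= x 0 n) nN P_neg prN P_ne.
by move: P_ne; rewrite leNgt gn => /P_ge0; rewrite leNgt gn.
Qed.

Lemma gcoef_Pnn n n' P : n \in nodes adj -> n' \in nodes adj ->
  is_Pnn adj M lam R n n' P ->
  forall g, gcoef P g = if (0 <= g 0 n) || (0 <= g 0 n') then gcoef Pplus g else 0.
Proof.
move=> nN n'N [_ P_ge0 P_neg P_neg'] g; apply/eqP/negPn/negP => P_ne.
pose pr (x : expo k) := (0 <= x 0 n) || (0 <= x 0 n').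
have [prN prN'] : (forall x, ~~ pr x -> x 0 n < 0) /\ (forall x, ~~ pr x -> x 0 n' < 0).
  by split=> x; rewrite negb_or -!ltNge => /andP[].
have gn := truncation_diff_neg nN P_neg prN P_ne.
have gn' := truncation_diff_neg n'N P_neg' prN' P_ne.
by move: P_ne; rewrite !leNgt gn gn' => /P_ge0; rewrite !leNgt gn gn'.
Qed.
End PolynomialParts.

Theorem mainTheorem2
  (k : nat) (adj : rel 'I_k) (e : 'I_k -> int)
  (Htree : is_tree adj)
  (Hneg : neg_def (intmat adj e))
  (Hnodes : nodes adj != set0)
  (* Z = Taylor expansion of the zeta function f *)
  (Z : series k)
  (HZ : is_taylor (zNum adj (intmat adj e)) (zDen adj (intmat adj e)) Z)
  (* h = [h0] in H = L'/L *)
  (h0 : expo k) (Hh0 : inL' (intmat adj e) h0)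
  (* f_h = Q / prod_{c in cs}(1 - t^c), whose expansion is Z_h *)
  (Q : gpoly k) (cs : seq (expo k))
  (Hfh : ratrep (Zpart Z h0) Q cs)
  (* reduced zeta function f_h(t_N) = R / A, A = prod_n (1 - t_N^{a_n}) *)
  (lam : 'I_k -> rat) (Hlam : forall n, n \in nodes adj -> 0 < lam n)
  (R : gpoly k) (HRsupp : node_supp adj R)
  (HR : gequiv (gmul R (gred adj (gprod (map (@gbinom k) cs))))
            (gmul (gred adj Q) (Aden adj (intmat adj e) lam)))
  (* P^n_h and P^{n,n'}_h *)
  (Pv : 'I_k -> gpoly k)
  (HPv : forall n, n \in nodes adj -> is_Pn adj (intmat adj e) lam R n (Pv n))
  (Pe : 'I_k -> 'I_k -> gpoly k)
  (HPe : forall n n', orb_adj adj n n' -> is_Pnn adj (intmat adj e) lam R n n' (Pe n n'))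
  (* P^+_h *)
  (Pplus : gpoly k) (HPplus : is_Pplus adj (intmat adj e) lam R Pplus)
  (n0 : 'I_k) (Hn0 : n0 \in nodes adj) :
  forall b : expo k,
    Ph_coef adj Pv Pe b = mult_s adj n0 b * gcoef Pplus b.
Proof.
move=> b; have [adj_sym adj_irr adj_conn card_edges_adj] := Htree.
have offdiag_ge0 := @intmat_offdiag_ge0 k adj e.
pose X n := 0 <= b 0 n.
have -> : mult_s adj n0 b =
    ind (X n0) + \sum_n \sum_(n' | oriented adj n0 n n') ind (X n && ~~ X n').
  congr (_ + _); apply: eq_bigr => n _; apply: eq_bigr => n' _.
  by rewrite /X ltNge.
rewrite -(orbifold_inclusion_exclusion adj_sym adj_irr adj_conn card_edges_adj Hn0).
rewrite mulrBl !mulr_suml; congr (_ - _).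
  apply: eq_bigr => n _; rewrite mulr_suml; apply: eq_bigr => n' /andP[nn' _].
  have [nN n'N _] := orb_adjP nn'.
  rewrite (gcoef_Pnn offdiag_ge0 Hneg Hlam HPplus nN n'N (HPe n n' nn')).
  by rewrite /X; case: ifP; rewrite ?mul1r ?mul0r.
apply: eq_bigr => n nN; rewrite (gcoef_Pn offdiag_ge0 Hneg Hlam HPplus nN (HPv n nN)).
by rewrite -mulrA /X /ind; case: ifP; rewrite ?mul1r ?mul0r.
Qed.
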